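(* Let $n\ge1$, $v>0$ a scalar and $\mathbf{b}$ a nonzero vector, held fixed, and for each $d\ge1$ let $h^*=\left(\frac{vd}{4n\|\mathbf{b}\|_2^2}\right)^{1/(d+4)}$ and $\operatorname{LOMSE}(h,n,d)=h^4\|\mathbf{b}\|_2^2+\frac{v}{nh^d}$. Then in high-dimensional action spaces the squared leading-order bias $(h^* )^4\|\mathbf{b}\|_2^2$ dominates the leading-order variance $\frac{v}{n(h^* )^d}$, in the sense that their ratio tends to $\infty$ as $d\to\infty$; furthermore $\operatorname{LOMSE}(h^*,n,d)\to\|\mathbf{b}\|_2^2$ as $d\to\infty$, i.e. $\operatorname{LOMSE}(h^*,n,d)$ approximates $\|\mathbf{b}\|_2^2$.
   Context: In the paper, $d$ is the action dimension, $h^*$ the optimal kernel bandwidth minimizing the leading-order MSE $\operatorname{LOMSE}$ of a kernel-relaxed importance-resampling estimate of a TD update vector, $\mathbf{b}$ the bias constant vector, $v$ the variance constant and $n$ the data size; the statement treats $\mathbf{b},v,n$ as fixed while $d$ grows. *)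

From HB Require Import structures.
From mathcomp Require Import all_boot all_order all_algebra.
From mathcomp Require Import all_classical all_reals all_analysis.
Set Implicit Arguments. Unset Strict Implicit. Unset Printing Implicit Defensive.
Import Order.TTheory GRing.Theory Num.Theory.
Local Open Scope ring_scope.

Definition sqnorm2 (R : realType) (m : nat) (b : 'rV[R]_m) : R :=
  \sum_(i < m) (b ord0 i) ^+ 2.

Definition hstar (R : realType) (m : nat) (b : 'rV[R]_m) (v : R) (n d : nat) : R :=
  powR ((v * d%:R) / (4 * n%:R * sqnorm2 b)) (d.+4%:R^-1).

Definition LObias2 (R : realType) (m : nat) (b : 'rV[R]_m) (h : R) : R :=
  h ^+ 4 * sqnorm2 b.

Definition LOvar (R : realType) (v h : R) (n d : nat) : R :=
  v / (n%:R * h ^+ d).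

Definition LOMSE (R : realType) (m : nat) (b : 'rV[R]_m) (v h : R) (n d : nat) : R :=
  LObias2 b h + LOvar v h n d.

(** The optimal bandwidth solves [h ^ (d+4) = c d] with [c = v / (4 n |b|^2)],
    so the variance term is [4/d] times the squared-bias term: their ratio is
    [d/4], and the LOMSE at [hstar] is [(1 + 4/d) hstar^4 |b|^2].  Finally
    [hstar = exp (ln (c d) / (d+4))] tends to [1], because [ln (c d) / d -> 0]. *)

From HB Require Import structures.
From mathcomp Require Import all_boot all_order all_algebra.
From mathcomp Require Import all_classical all_reals all_analysis.
From mathcomp Require Import ring.
Import Order.TTheory GRing.Theory Num.Theory.
Import numFieldNormedType.Exports.
Local Open Scope classical_set_scope.
Local Open Scope ring_scope.

Section asymptotics.
Context {R : realType}.

Lemma cvg_invr_natr : (fun d : nat => (d%:R : R)^-1) @ \oo --> 0.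
Proof.
apply/gtr0_cvgV0; last exact: cvgr_idn.
by near=> d; rewrite ltr0n; near: d; exact: nbhs_infty_gt.
Unshelve. all: by end_near.
Qed.

Lemma cvg_sqrt_invr_natr :
  (fun d : nat => Num.sqrt ((d%:R : R)^-1)) @ \oo --> 0.
Proof.
rewrite -sqrtr0; exact: (continuous_cvg _ (@sqrt_continuous R 0) cvg_invr_natr).
Qed.

Lemma ln_le_twice_sqrt (x : R) : 0 < x -> ln x <= 2 * Num.sqrt x.
Proof.
move=> x_gt0; have sx_gt0 : 0 < Num.sqrt x by rewrite sqrtr_gt0.
rewrite -{1}(sqr_sqrtr (ltW x_gt0)) lnXn // mulr_natl.
by rewrite lerMn2r ltW // ln_sublinear.
Qed.

Lemma cvg_ln_div_natr (c : R) (k : nat) : 0 < c ->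
  (fun d : nat => ln (c * d%:R) / (k + d)%:R) @ \oo --> 0.
Proof.
move=> c_gt0.
apply: (@squeeze_cvgr _ _ _ _ (cst 0)
  (fun d => 2 * Num.sqrt c * Num.sqrt ((d%:R : R)^-1))); last 2 first.
- exact: cvg_cst.
- by rewrite -(mulr0 (2 * Num.sqrt c)); apply: cvgMl_tmp; exact: cvg_sqrt_invr_natr.
near=> d.
have d_gt0 : 0 < (d%:R : R) by rewrite ltr0n; near: d; exact: nbhs_infty_gt.
have cd_ge1 : 1 <= c * d%:R.
  by rewrite -ler_pdivrMl // mulr1; near: d; exact: (cvgryPge _).1 cvgr_idn _.
have kd_ge : d%:R <= ((k + d)%:R : R) by rewrite ler_nat leq_addl.
apply/andP; split; first by rewrite divr_ge0 ?ln_ge0.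
apply: (le_trans (y := 2 * Num.sqrt (c * d%:R) / d%:R)).
  apply: ler_pM; rewrite ?ln_ge0 ?invr_ge0 ?ler0n ?ln_le_twice_sqrt //.
    exact: lt_le_trans cd_ge1.
  by rewrite lef_pV2 ?posrE // (lt_le_trans d_gt0).
rewrite sqrtrM ?(ltW c_gt0) // sqrtrV ?(ltW d_gt0) //.
rewrite -{2}(sqr_sqrtr (ltW d_gt0)) invfM !mulrA mulfK //.
by rewrite gt_eqF // sqrtr_gt0.
Unshelve. all: by end_near.
Qed.

Lemma cvg_powR_natr_inv (c : R) (k : nat) : 0 < c ->
  (fun d : nat => (c * d%:R) `^ (k + d)%:R^-1) @ \oo --> (1 : R).
Proof.
move=> c_gt0.
have powRE : \forall d \near \oo,
    expR (ln (c * d%:R) / (k + d)%:R) = (c * (d%:R : R)) `^ (k + d)%:R^-1.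
  near=> d; have d_gt0 : 0 < (d%:R : R).
    by rewrite ltr0n; near: d; exact: nbhs_infty_gt.
  by rewrite /powR gt_eqF ?mulr_gt0 // mulrC.
apply: cvg_trans (near_eq_cvg powRE) _.
have := continuous_cvg _ (@continuous_expR R 0) (cvg_ln_div_natr c k c_gt0).
by rewrite expR0; apply.
Unshelve. all: by end_near.
Qed.

End asymptotics.

Lemma sqnorm2_gt0 {R : realType} {m : nat} {b : 'rV[R]_m} :
  b != 0 -> 0 < sqnorm2 b.
Proof.
move=> b_neq0; rewrite lt_def sumr_ge0 ?andbT => [|i _]; last exact: sqr_ge0.
apply: contra b_neq0 => /eqP /psumr_eq0P b2_eq0; apply/eqP/matrixP => i j.
rewrite !mxE (ord1 i); apply/eqP; rewrite -sqrf_eq0; apply/eqP.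
by apply: b2_eq0 => // k _; exact: sqr_ge0.
Qed.

Lemma exprn_powR_invn {R : realType} (a : R) (k : nat) :
  0 <= a -> (0 < k)%N -> (a `^ k%:R^-1) ^+ k = a.
Proof.
move=> a_ge0 k_gt0.
by rewrite -powR_mulrn ?powR_ge0 // -powRrM mulVf ?pnatr_eq0 -?lt0n ?powRr1.
Qed.

Lemma LOvar_balanced {R : realType} {m : nat} (b : 'rV[R]_m) (v h : R)
    (n d : nat) :
  (0 < n)%N -> (0 < d)%N -> v != 0 -> b != 0 ->
  h ^+ d.+4 = v * d%:R / (4 * n%:R * sqnorm2 b) ->
  LOvar v h n d = 4 / d%:R * LObias2 b h.
Proof.
move=> n_gt0 d_gt0 v_neq0 b_neq0 hE.
have B_neq0 : sqnorm2 b != 0 by rewrite gt_eqF ?sqnorm2_gt0.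
have h_neq0 : h != 0.
  apply: contra_eq_neq hE => ->; rewrite expr0n eq_sym.
  by rewrite mulf_neq0 ?invr_neq0 ?mulf_neq0 ?pnatr_eq0 -?lt0n.
rewrite /LOvar /LObias2 -[d.+4]addn4 exprD in hE *.
have -> : h ^+ d = v * d%:R / (4 * n%:R * sqnorm2 b) / h ^+ 4.
  by rewrite -hE mulfK ?expf_neq0.
by field; rewrite h_neq0 B_neq0 v_neq0 !pnatr_eq0 -!lt0n n_gt0 d_gt0.
Qed.

Theorem proposition2 (R : realType) (m n : nat) (v : R) (b : 'rV[R]_m) :
  (1 <= n)%N -> 0 < v -> b != 0 ->
  ((fun d : nat => LObias2 b (hstar b v n d) / LOvar v (hstar b v n d) n d)
     @ \oo --> +oo) /\
  ((fun d : nat => LOMSE b v (hstar b v n d) n d) @ \oo --> sqnorm2 b).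
Proof.
move=> n_gt0 v_gt0 b_neq0.
have B_gt0 := sqnorm2_gt0 b_neq0.
set c := v / (4 * n%:R * sqnorm2 b).
have c_gt0 : 0 < c by rewrite divr_gt0 // !mulr_gt0 // ltr0n.
have hstarE d : hstar b v n d = (c * d%:R) `^ (4 + d)%:R^-1.
  by rewrite /hstar mulrAC.
have balanced : \forall d \near \oo, 0 < LObias2 b (hstar b v n d) /\
    LOvar v (hstar b v n d) n d = 4 / d%:R * LObias2 b (hstar b v n d).
  near=> d; have d_gt0 : (0 < d)%N by near: d; exact: nbhs_infty_gt.
  have cd_gt0 : 0 < c * d%:R by rewrite mulr_gt0 ?ltr0n.
  split; first by rewrite mulr_gt0 // exprn_gt0 // hstarE powR_gt0.
  apply: LOvar_balanced; rewrite ?gt_eqF //.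
  by rewrite hstarE exprn_powR_invn ?ltW // mulrAC.
have bias_cvg : (fun d => LObias2 b (hstar b v n d)) @ \oo --> sqnorm2 b.
  rewrite -[X in _ --> X]mul1r -(expr1n R 4); apply: cvgMr_tmp.
  rewrite (funext hstarE).
  exact: (continuous_cvg _ (@exprn_continuous R 4 1) (cvg_powR_natr_inv c 4 c_gt0)).
split.
- have ratioE : \forall d \near \oo, (d%:R : R) / 4 =
      LObias2 b (hstar b v n d) / LOvar v (hstar b v n d) n d.
    near=> d; have /(_ _)[//|bias_gt0 ->] := near balanced d.
    by rewrite invfM mulrCA mulfV ?gt_eqF // mulr1 invf_div.
  apply: cvg_trans (near_eq_cvg ratioE) _.
  apply/cvgryPge => A; near=> d; rewrite ler_pdivlMr //.
  by near: d; exact: (cvgryPge _).1 cvgr_idn _.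
- have LOMSEE : \forall d \near \oo, (1 + 4 / d%:R) * LObias2 b (hstar b v n d) =
      LOMSE b v (hstar b v n d) n d.
    near=> d; have /(_ _)[//|_ LOvarE] := near balanced d.
    by rewrite /LOMSE LOvarE mulrDl mul1r.
  apply: cvg_trans (near_eq_cvg LOMSEE) _.
  have inv_cvg : (fun d : nat => 1 + 4 / (d%:R : R)) @ \oo --> (1 + 4 * 0 : R).
    exact: cvgD (cvg_cst _) (cvgMl_tmp cvg_invr_natr).
  rewrite mulr0 addr0 in inv_cvg.
  have := cvgM inv_cvg bias_cvg; rewrite mul1r.
  exact.
Unshelve. all: by end_near.
Qed.
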